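(* Let $(Q,\rightarrow)$ be a finite transition system, $\mathscr{R}$ a preorder on $Q$ and $\mathscr{P}\subseteq\mathscr{R}$ an equivalence relation with a representative $E.\mathrm{rep}\in E$ fixed for each block $E$ of $\mathscr{P}$, such that there is no pair of a block $E$ of $\mathscr{P}$ and a block $B$ of $\mathscr{R}$ with $E\rightarrow B$ and $\mathrm{RelCount}_{(\mathscr{P},\mathscr{R})}(E,B)=0$. Let $E$ be a block of $\mathscr{P}$ and $B$ a block of $\mathscr{R}$ with $E\rightarrow B$. Then $E.\mathrm{rep}\in\rightarrow_{\mathscr{R}}^{-1}(\mathscr{R}(B))$, i.e. there is $q$ with $E.\mathrm{rep}\rightarrow_{\mathscr{R}} q$ and $B\,\mathscr{R}\,q$.
   Context: A preorder is a reflexive transitive relation; its blocks are $[q]_{\mathscr{R}}=\{q'\mid q\,\mathscr{R}\,q'\wedge q'\,\mathscr{R}\,q\}$. For sets, $X\rightarrow Y$ means some $x\in X,y\in Y$ have $x\rightarrow y$; $X\,\mathscr{R}\,Y$ means $(X\times Y)\cap\mathscr{R}\ne\emptyset$. $\mathrm{RelCount}_{(\mathscr{P},\mathscr{R})}(E,B)=|\{E'\text{ block of }\mathscr{P}\mid E.\mathrm{rep}\rightarrow E'\wedge B\,\mathscr{R}\,E'\}|$. A transition $q\rightarrow q'$ is $\mathscr{R}$-maximal, $q\rightarrow_{\mathscr{R}}q'$, if for all $q''$, ($q\rightarrow q''$ and $q'\,\mathscr{R}\,q''$) implies $q''\in[q']_{\mathscr{R}}$. *)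

From mathcomp Require Import all_boot.
Set Implicit Arguments. Unset Strict Implicit. Unset Printing Implicit Defensive.

Section Defs.
Variable Q : finType.

Definition block (R : rel Q) (q : Q) : {set Q} := [set q' | R q q' && R q' q].

Definition blocks (R : rel Q) : {set {set Q}} := [set block R q | q in Q].

Definition setTrans (trans : rel Q) (X Y : {set Q}) : bool :=
  [exists x in X, exists y in Y, trans x y].

Definition setRel (R : rel Q) (X Y : {set Q}) : bool :=
  [exists x in X, exists y in Y, R x y].

Definition RelCount (trans P R : rel Q) (rep : {set Q} -> Q) (E B : {set Q}) : nat :=
  #|[set E' in blocks P | setTrans trans [set rep E] E' && setRel R B E']|.

Definition maxtrans (trans R : rel Q) (q q' : Q) : bool :=
  trans q q' &&
  [forall q'', (trans q q'' && R q' q'') ==> (q'' \in block R q')].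

End Defs.

From mathcomp Require Import all_boot.

Set Implicit Arguments.
Unset Strict Implicit.
Unset Printing Implicit Defensive.

(* RelCount(E, B) <> 0 gives a P-block E' reached from E.rep that meets R(B);
   as P is contained in R and R(B) is R-upward closed, the target of that
   transition lies in R(B).  Among all transitions of E.rep into R(B), one whose
   target has the fewest R-successors is R-maximal: a strictly R-larger target
   would have strictly fewer R-successors. *)

Section MaximalTransitions.

Variables (Q : finType) (trans R : rel Q).
Hypothesis R_refl : reflexive R.
Hypothesis R_trans : transitive R.

Definition upset (x : Q) : {set Q} := [set y | R x y].

Definition rel_image (X : {set Q}) : {set Q} := [set y | [exists x in X, R x y]].

Lemma upset_sub x y : R x y -> upset y \subset upset x.
Proof. by move=> Rxy; apply/subsetP => z; rewrite !inE; apply: R_trans. Qed.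

Lemma card_upset_le_rel x y : R x y -> #|upset x| <= #|upset y| -> R y x.
Proof.
move=> Rxy le_xy; have /eqP eq_up : upset y == upset x.
  by rewrite eqEcard upset_sub.
have : x \in upset x by rewrite inE.
by rewrite -eq_up inE.
Qed.

Lemma rel_image_closed X x y : R x y -> x \in rel_image X -> y \in rel_image X.
Proof.
move=> Rxy; rewrite !inE => /exists_inP [z zX Rzx].
by apply/exists_inP; exists z; last exact: R_trans Rxy.
Qed.

Lemma exists_maxtrans (U : {set Q}) q q0 :
    (forall x y, R x y -> x \in U -> y \in U) ->
    trans q q0 -> q0 \in U ->
  exists2 q', maxtrans trans R q q' & q' \in U.
Proof.
move=> U_closed tq0 q0U.
have reach_q0 : [pred x | trans q x && (x \in U)] q0 by rewrite /= tq0.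
case: (arg_minnP (fun x => #|upset x|) reach_q0) => q' /andP [tq' q'U] q'_min.
exists q' => //; rewrite /maxtrans tq' /=.
apply/forallP => q''; apply/implyP => /andP [tq'' Rq'q''].
have Rq''q' : R q'' q'.
  by apply: card_upset_le_rel => //; apply: q'_min; rewrite /= tq'' (U_closed q').
by rewrite inE Rq'q''.
Qed.

End MaximalTransitions.

Lemma block_rel (Q : finType) (R : rel Q) q x y :
  transitive R -> x \in block R q -> y \in block R q -> R x y.
Proof.
by move=> R_trans; rewrite !inE => /andP [_ Rxq] /andP [Rqy _]; apply: R_trans Rqy.
Qed.

Lemma RelCount_neq0_trans_rel_image (Q : finType) (trans P R : rel Q)
    (rep : {set Q} -> Q) (E B : {set Q}) :
    transitive P -> transitive R -> (forall x y, P x y -> R x y) ->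
    RelCount trans P R rep E B != 0 ->
  exists2 q, trans (rep E) q & q \in rel_image R B.
Proof.
move=> P_trans R_trans P_sub_R.
rewrite cards_eq0 => /set0Pn [_ /setIdP [/imsetP [q0 _ ->] /andP [tE' RBE']]].
case/exists_inP: tE' => _ /set1P -> /exists_inP [e te_rep e_in].
case/exists_inP: RBE' => b bB /exists_inP [e' e'_in Rbe'].
exists e => //; rewrite inE; apply/exists_inP; exists b => //.
by apply: R_trans Rbe' _; apply/P_sub_R/(block_rel P_trans e'_in).
Qed.

Theorem lemma4 (Q : finType) (trans R P : rel Q) (rep : {set Q} -> Q)
  (R_refl : reflexive R) (R_trans : transitive R)
  (P_refl : reflexive P) (P_sym : symmetric P) (P_trans : transitive P)
  (P_sub_R : forall x y, P x y -> R x y)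
  (rep_in : forall E, E \in blocks P -> rep E \in E)
  (no_zero : ~ exists E B, [/\ E \in blocks P, B \in blocks R,
                               setTrans trans E B & RelCount trans P R rep E B = 0])
  (E B : {set Q}) (hE : E \in blocks P) (hB : B \in blocks R)
  (hEB : setTrans trans E B) :
  exists q, maxtrans trans R (rep E) q /\ [exists b in B, R b q].
Proof.
have count_neq0 : RelCount trans P R rep E B != 0.
  by apply/eqP => count0; apply: no_zero; exists E, B.
have [q0 tq0 q0_in] := RelCount_neq0_trans_rel_image P_trans R_trans P_sub_R count_neq0.
have [q maxq q_in] := exists_maxtrans R_refl R_trans
  (@rel_image_closed _ _ R_trans B) tq0 q0_in.
by exists q; rewrite inE in q_in.
Qed.
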